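(* Let $a(x),b(x)\in\mathbb{F}_2[x]/\langle x^n-1\rangle$ both have weight at least two. Then the girth $g(G)$ of the Tanner graph associated with the generalized bicycle code defined by $a(x)$ and $b(x)$ satisfies $g(G)\le 8$.
   Context: Weight is the number of nonzero coefficients. The Tanner graph of the GB code defined by $a(x)=\sum a_tx^t$, $b(x)=\sum b_tx^t$ is the bipartite graph with $n$ check nodes $x_0,\dots,x_{n-1}$ (X-checks) and $2n$ qubit nodes $q_0,\dots,q_{n-1},q'_0,\dots,q'_{n-1}$, where $x_t$ is adjacent to $q_c$ iff $a_{t-c}=1$ and to $q'_c$ iff $b_{t-c}=1$ (indices mod $n$). The girth is the length of a shortest cycle. *)

From HB Require Import structures.
From mathcomp Require Import all_boot all_order all_algebra.
Set Implicit Arguments. Unset Strict Implicit. Unset Printing Implicit Defensive.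
Import GRing.Theory.
Local Open Scope ring_scope.

(* An element of F_2[x]/<x^n - 1> is represented by its coefficient vector
   (a_0, ..., a_{n-1}) : a(x) = \sum_t a_t x^t. *)
Definition gbpoly (n : nat) := {ffun 'I_n -> 'F_2}.

Definition weight n (a : gbpoly n) : nat := #|[set t | a t != 0]|.

(* a_{(t - c) mod n} = 1, i.e. there is u with a_u = 1 and t = c + u (mod n) *)
Definition gb_rel n (a : gbpoly n) (t c : 'I_n) : bool :=
  [exists u : 'I_n, (a u != 0) && ((c + u) %% n == t)%N].

(* Vertices of the Tanner graph: inl t = check x_t,
   inr (inl c) = qubit q_c, inr (inr c) = qubit q'_c. *)
Definition tanner_vertex (n : nat) := ('I_n + ('I_n + 'I_n))%type.

Definition tanner_adj n (a b : gbpoly n) : rel (tanner_vertex n) :=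
  fun v w =>
    match v, w with
    | inl t, inr (inl c) => gb_rel a t c
    | inr (inl c), inl t => gb_rel a t c
    | inl t, inr (inr c) => gb_rel b t c
    | inr (inr c), inl t => gb_rel b t c
    | _, _ => false
    end.

Definition is_graph_cycle (T : eqType) (e : rel T) (p : seq T) : bool :=
  [&& uniq p, (2 < size p)%N & cycle e p].

(* "girth(G) <= k": the shortest cycle has length at most k, i.e.
   some cycle has length at most k (an acyclic graph has infinite girth). *)
Definition girth_le (T : eqType) (e : rel T) (k : nat) : Prop :=
  exists p : seq T, is_graph_cycle e p /\ (size p <= k)%N.

From mathcomp Require Import all_boot all_order all_algebra.
From mathcomp Require Import ring.
Import GRing.Theory.

Set Implicit Arguments.
Unset Strict Implicit.
Unset Printing Implicit Defensive.

(* Pick u1 <> u2 in the support of a and v1 <> v2 in the support of b.  The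
   edges q_c -- x_(c+u) and q'_c -- x_(c+v) let a walk move by +-u_i and +-v_j,
   and since Z/n is abelian the 8-step walk +u1 -v1 +v2 -u1 +u2 -v2 +v1 -u2
   from q_0 closes up.  Its vertices are pairwise distinct as soon as
   u1 - u2 <> +-(v1 - v2); otherwise the walk +u1 -v2 +v1 -u2 (resp. with v1,
   v2 swapped) is already a 4-cycle. *)

Lemma weight_le n (a : gbpoly n) : (weight a <= n)%N.
Proof. by rewrite -[n in (_ <= n)%N]card_ord max_card. Qed.

Lemma weight_gt1_support n (a : gbpoly n) : (1 < weight a)%N ->
  exists u1 u2, [/\ a u1 != 0, a u2 != 0 & u1 != u2]%R.
Proof.
rewrite /weight => /card_gt1P [u1 [u2 [au1 au2 u12]]].
by exists u1, u2; rewrite !inE in au1 au2.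
Qed.

Lemma girth_leW (T : eqType) (e : rel T) m n :
  (m <= n)%N -> girth_le e m -> girth_le e n.
Proof. by move=> le_mn [p [p_cycle p_size]]; exists p; rewrite (leq_trans p_size). Qed.

Local Open Scope ring_scope.

Lemma neq_of_subr (V : zmodType) (x y d : V) : d != 0 -> x - y = d -> x != y.
Proof. by move=> d_neq0 xy_d; rewrite -subr_eq0 xy_d. Qed.

Section TannerCycles.

Variable k : nat.

Lemma gb_rel_add (f : gbpoly k.+2) (t c u : 'I_k.+2) :
  f u != 0 -> t = c + u -> gb_rel f t c.
Proof. by move=> fu ->; apply/existsP; exists u; rewrite fu /=. Qed.

Variables (a b : gbpoly k.+2) (u1 u2 v1 v2 : 'I_k.+2).
Hypotheses (au1 : a u1 != 0) (au2 : a u2 != 0).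
Hypotheses (bv1 : b v1 != 0) (bv2 : b v2 != 0).
Hypothesis u12 : u1 != u2.

Lemma tanner_four_cycle : u1 - u2 = v2 - v1 -> girth_le (tanner_adj a b) 4.
Proof.
move=> duv; have v2E : v2 = v1 + (u1 - u2) by rewrite duv; ring.
exists [:: inr (inl 0); inl u1; inr (inr (u1 - v2)); inl u2]; split => //.
rewrite /is_graph_cycle /= !inE /= u12 !andbT; apply/and5P; split => //.
- by apply: (gb_rel_add au1); ring.
- by apply: (gb_rel_add bv2); ring.
- by apply: (gb_rel_add bv1); rewrite v2E; ring.
- by apply: (gb_rel_add au2); ring.
Qed.

Hypothesis v12 : v1 != v2.
Hypotheses (uv_neq : u1 - u2 != v1 - v2) (uv_neqN : u1 - u2 != v2 - v1).

Lemma tanner_eight_cycle : girth_le (tanner_adj a b) 8.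
Proof.
have du : u1 - u2 != 0 by rewrite subr_eq0.
have dv : v1 - v2 != 0 by rewrite subr_eq0.
have duv_sub : u1 - u2 - (v1 - v2) != 0 by rewrite subr_eq0.
have duv_add : u1 - u2 + (v1 - v2) != 0.
  by rewrite -[v1 - v2]opprB subr_eq0.
exists [:: inr (inl 0); inl u1; inr (inr (u1 - v1)); inl (u1 - v1 + v2);
           inr (inl (v2 - v1)); inl (v2 - v1 + u2); inr (inr (u2 - v1)); inl u2].
split => //; apply/and3P; split => //.
- have ne1 : 0 != v2 - v1 by apply: (neq_of_subr dv); ring.
  have ne2 : u1 - v1 != u2 - v1 by apply: (neq_of_subr du); ring.
  have ne3 : u1 != u1 - v1 + v2 by apply: (neq_of_subr dv); ring.
  have ne4 : u1 != v2 - v1 + u2 by apply: (neq_of_subr duv_add); ring.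
  have ne5 : u1 - v1 + v2 != v2 - v1 + u2 by apply: (neq_of_subr du); ring.
  have ne6 : u1 - v1 + v2 != u2 by apply: (neq_of_subr duv_sub); ring.
  have ne7 : v2 - v1 + u2 != u2 by rewrite eq_sym; apply: (neq_of_subr dv); ring.
  rewrite /= !inE !(inj_eq inl_inj, inj_eq inr_inj).
  by rewrite (negbTE ne1) (negbTE ne2) (negbTE ne3) (negbTE ne4) (negbTE ne5)
    (negbTE ne6) (negbTE ne7) (negbTE u12).
- rewrite /= andbT; do !(apply/andP; split).
  + by apply: (gb_rel_add au1); ring.
  + by apply: (gb_rel_add bv1); ring.
  + by apply: (gb_rel_add bv2); ring.
  + by apply: (gb_rel_add au1); ring.
  + by apply: (gb_rel_add au2); ring.
  + by apply: (gb_rel_add bv2); ring.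
  + by apply: (gb_rel_add bv1); ring.
  + by apply: (gb_rel_add au2); ring.
Qed.

End TannerCycles.

Lemma tanner_girth_le8 k (a b : gbpoly k.+2) (u1 u2 v1 v2 : 'I_k.+2) :
  a u1 != 0 -> a u2 != 0 -> b v1 != 0 -> b v2 != 0 -> u1 != u2 -> v1 != v2 ->
  girth_le (tanner_adj a b) 8.
Proof.
move=> au1 au2 bv1 bv2 u12 v12.
have [duv | uv_neqN] := eqVneq (u1 - u2) (v2 - v1).
  exact: girth_leW (tanner_four_cycle au1 au2 bv1 bv2 u12 duv).
have [duv | uv_neq] := eqVneq (u1 - u2) (v1 - v2).
  exact: girth_leW (tanner_four_cycle au1 au2 bv2 bv1 u12 duv).
exact: tanner_eight_cycle au1 au2 bv1 bv2 u12 v12 uv_neq uv_neqN.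
Qed.

Theorem corollary1 (n : nat) (a b : gbpoly n) :
  (2 <= weight a)%N -> (2 <= weight b)%N ->
  girth_le (tanner_adj a b) 8.
Proof.
move=> wa wb; have := leq_trans wa (weight_le a).
case: n a b wa wb => [|[|k]] // a b wa wb _.
have [u1 [u2 [au1 au2 u12]]] := weight_gt1_support wa.
have [v1 [v2 [bv1 bv2 v12]]] := weight_gt1_support wb.
exact: tanner_girth_le8 au1 au2 bv1 bv2 u12 v12.
Qed.
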